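(* Let $G=(V,E)$ be an undirected graph with edge weights $w:E\to[0,1]$, node demands $x:V\to[0,1]$, and distinct node lengths $d(v)$, such that \[\forall u\in V:\quad x(u)+\sum_{\{v\in V:d(v)>d(u)\}}w(v,u)\,x(v)\le1.\] Then for every positive integer $T$ there is a multi-coloring $\pi:V\to2^{\{0,\dots,T-1\}}$ such that (1) for every $c\in\{0,\dots,T-1\}$ and every $u\in\pi^{-1}(c)$: $\sum_{\{v\in\pi^{-1}(c):d(v)>d(u)\}}w(v,u)\le1$; (2) for every $u\in V$: $|\pi(u)|\ge\lfloor x(u)\cdot T\rfloor$.
   Context: $\pi^{-1}(c)=\{v\in V: c\in\pi(v)\}$. For $u,v\in V$, $w(v,u)$ denotes the weight of the edge $\{u,v\}$ (taken to be $0$ if $\{u,v\}\notin E$). *)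

From mathcomp Require Import all_boot all_order all_algebra.
Set Implicit Arguments. Unset Strict Implicit. Unset Printing Implicit Defensive.
Import Order.TTheory GRing.Theory Num.Theory.
Local Open Scope ring_scope.

(* A weighted undirected simple graph on a finite vertex type V is encoded by a
   symmetric weight function w : V -> V -> R with w v v = 0, where w v u is the
   weight of edge {u,v} and is 0 when {u,v} is not an edge (as in the paper). *)
Definition weighted_graph (R : numDomainType) (V : finType) (w : V -> V -> R) :=
  (forall u v, w u v = w v u) /\ (forall v, w v v = 0) /\
  (forall u v, 0 <= w u v <= 1).

Definition color_class (V : finType) (T : nat) (pi : V -> {set 'I_T}) (c : 'I_T)
  : {set V} := [set v | c \in pi v].

From mathcomp Require Import all_boot all_order all_algebra.
From mathcomp Require Import lra.
Import Order.TTheory GRing.Theory Num.Theory.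
Set Implicit Arguments. Unset Strict Implicit. Unset Printing Implicit Defensive.
Local Open Scope ring_scope.

(* Colour the vertices greedily in order of decreasing length d.  When u is
   coloured, every vertex v with d v > d u already has its final colours and
   |pi v| <= x v T, so the total load sum_c L c, where L c sums w v u over
   those v of colour c, is at most T (1 - x u) by the hypothesis.  Hence at
   most T (1 - x u) colours have load > 1, and u can take floor (x u T) of the
   others.  Vertices coloured later are shorter and never enter these loads. *)

Lemma card_gt1_le_sum (R : numDomainType) (I : finType) (L : I -> R) :
  (forall c, 0 <= L c) -> #|[set c | 1 < L c]|%:R <= \sum_c L c.
Proof.
move=> L_ge0; rewrite (bigID (fun c => 1 < L c)) /= -[X in X <= _]addr0.
apply: lerD; last exact: sumr_ge0.
rewrite -sum1_card natr_sum (eq_bigl (fun c => 1 < L c)) => [|c]; last by rewrite inE.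
by apply: ler_sum => c /ltW.
Qed.

Lemma floor_le_truncn (R : archiRealDomainType) (r : R) :
  0 <= r -> Num.floor r <= (Num.truncn r)%:Z.
Proof. by move=> r_ge0; rewrite truncn_floor r_ge0 gez0_abs // floor_ge0. Qed.

Lemma exists_subset_card (T : finType) (A : {set T}) (k : nat) :
  (k <= #|A|)%N -> exists2 B : {set T}, B \subset A & #|B| = k.
Proof.
case/card_geqP=> s [s_uniq s_size sA]; exists [set c in s].
  by apply/subsetP=> c; rewrite inE => /sA.
by rewrite cardsE (card_uniqP s_uniq).
Qed.

Lemma exists_light_subset (R : archiRealFieldType) (I : finType) (L : I -> R)
    (y : R) :
  (forall c, 0 <= L c) -> 0 <= y -> \sum_c L c <= #|I|%:R * (1 - y) ->
  exists C : {set I}, [/\ #|C|%:R <= y * #|I|%:R,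
    Num.floor (y * #|I|%:R) <= #|C|%:Z & forall c, c \in C -> L c <= 1].
Proof.
move=> L_ge0 y_ge0 sumL.
set light := [set c | L c <= 1]; set k := Num.truncn (y * #|I|%:R).
have yI_ge0 : 0 <= y * #|I|%:R by rewrite mulr_ge0.
have light_big : y * #|I|%:R <= #|light|%:R.
  have heavy_small := card_gt1_le_sum L_ge0.
  have heavy_eq : ~: light = [set c | 1 < L c].
    by apply/setP=> c; rewrite !inE -ltNge.
  have : (#|light| + #|~: light|)%:R = #|I|%:R :> R by rewrite cardsC.
  rewrite natrD heavy_eq; lra.
have [C C_light C_card] : exists2 C : {set I}, C \subset light & #|C| = k.
  by apply: exists_subset_card; rewrite truncn_le_nat (le_lt_trans light_big) // ltr_nat.
exists C; rewrite C_card; split.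
- by rewrite truncn_le.
- exact: floor_le_truncn.
- by move=> c /(subsetP C_light); rewrite inE.
Qed.

Lemma sum_over_color_classes (M : nmodType) (V : finType) (T : nat)
    (pi : V -> {set 'I_T}) (P : pred V) (f : V -> M) :
  \sum_c \sum_(v in color_class pi c | P v) f v = \sum_(v | P v) f v *+ #|pi v|.
Proof.
rewrite (eq_bigr (fun c => \sum_(v | P v) (if c \in pi v then f v else 0))).
  by rewrite exchange_big; apply: eq_bigr => v _; rewrite -big_mkcond sumr_const.
by move=> c _; rewrite -big_mkcondr; apply: eq_bigl => v; rewrite inE andbC.
Qed.

Section GreedyColoring.

Variables (R : archiRealFieldType) (V : finType) (w : V -> V -> R) (x d : V -> R).
Variable T : nat.
Hypothesis w_ge0 : forall u v, 0 <= w u v.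
Hypothesis x_ge0 : forall v, 0 <= x v.
Hypothesis x_load : forall u, x u + \sum_(v | d v > d u) w v u * x v <= 1.

Definition load (pi : V -> {set 'I_T}) (c : 'I_T) (u : V) : R :=
  \sum_(v in color_class pi c | d u < d v) w v u.

Definition partial_coloring (S : {set V}) (pi : V -> {set 'I_T}) :=
  [/\ forall v, v \notin S -> pi v = set0,
      forall v, #|pi v|%:R <= x v * T%:R,
      forall v, v \in S -> Num.floor (x v * T%:R) <= #|pi v|%:Z
    & forall c u, u \in color_class pi c -> load pi c u <= 1].

Lemma partial_coloring0 : partial_coloring set0 (fun=> set0).
Proof.
split=> [//|v|v|c u]; last by rewrite inE inE.
  by rewrite cards0 mulr_ge0.
by rewrite inE.
Qed.

Lemma sum_load_le (pi : V -> {set 'I_T}) u :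
  (forall v, #|pi v|%:R <= x v * T%:R) -> \sum_c load pi c u <= T%:R * (1 - x u).
Proof.
move=> pi_le; rewrite sum_over_color_classes.
apply: (@le_trans _ _ (\sum_(v | d u < d v) w v u * x v * T%:R)).
  by apply: ler_sum => v _; rewrite -mulrA -[_ *+ _]mulr_natr ler_wpM2l.
rewrite -mulr_suml mulrC; apply: ler_wpM2l => //; rewrite lerBrDl; exact: x_load.
Qed.

Lemma load_recolor (pi : V -> {set 'I_T}) (C : {set 'I_T}) u u' c : d u <= d u' ->
  load (fun v => if v == u then C else pi v) c u' = load pi c u'.
Proof.
move=> le_uu'; apply: eq_bigl => v; rewrite !inE.
by case: eqP => // ->; rewrite ltNge le_uu' !andbF.
Qed.

Lemma extend_partial_coloring S pi u :
  partial_coloring S pi -> (forall v, v \in S -> d u <= d v) ->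
  exists C, partial_coloring (u |: S) (fun v => if v == u then C else pi v).
Proof.
move=> [pi_out pi_le pi_floor pi_load] u_min.
have load_ge0 c : 0 <= load pi c u by apply: sumr_ge0.
have [|C [C_le C_floor C_light]] := exists_light_subset load_ge0 (x_ge0 u).
  by rewrite card_ord; apply: sum_load_le.
rewrite card_ord in C_le C_floor.
exists C; split=> [v|v|v|c u'].
- by rewrite !inE negb_or => /andP[/negbTE-> /pi_out].
- by case: eqP => [->|_].
- by rewrite !inE; case: eqP => [->|_ /pi_floor].
- rewrite !inE; case: eqP => [->|_ u'c].
    by rewrite load_recolor // => /C_light.
  have u'S : u' \in S by apply: contraTT u'c => /pi_out->; rewrite inE.
  by rewrite load_recolor ?u_min //; apply: pi_load; rewrite inE.
Qed.

Lemma exists_partial_coloring (S : {set V}) : exists pi, partial_coloring S pi.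
Proof.
have [n] := ubnP #|S|; elim: n S => // n IH S S_lt.
have [->|[u0 u0S]] := set_0Vmem S; first by exists (fun=> set0); apply: partial_coloring0.
have [u uS u_min] := @arg_minP _ R _ u0 (fun v => v \in S) d u0S.
have [|pi pi_col] := IH (S :\ u); first by rewrite (cardsD1 u S) uS in S_lt.
have [|C] := @extend_partial_coloring _ _ u pi_col; first by move=> v /setD1P[_ /u_min].
by rewrite setD1K //; exists (fun v => if v == u then C else pi v).
Qed.

End GreedyColoring.

Theorem lemma5 (R : archiRealFieldType) (V : finType) (w : V -> V -> R)
  (x : V -> R) (d : V -> R) :
  weighted_graph w ->
  (forall v, 0 <= x v <= 1) ->
  injective d ->
  (forall u, x u + \sum_(v | d v > d u) w v u * x v <= 1) ->
  forall T : nat, (0 < T)%N ->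
  exists pi : V -> {set 'I_T},
    (forall c : 'I_T, forall u, u \in color_class pi c ->
       \sum_(v in color_class pi c | d v > d u) w v u <= 1) /\
    (forall u, Num.floor (x u * T%:R) <= (#|pi u|)%:Z).
Proof.
move=> [_ [_ w01]] x01 _ x_load T _.
have w_ge0 u v : 0 <= w u v by case/andP: (w01 u v).
have x_ge0 v : 0 <= x v by case/andP: (x01 v).
have [pi [_ _ pi_floor pi_load]] := exists_partial_coloring T w_ge0 x_ge0 x_load [set: V].
by exists pi; split=> // u; apply: pi_floor; rewrite inE.
Qed.
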